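(* For every integer $\ell\ge 1$ there exists a $(5^{\ell},30^{\ell})$ strategy for the GKS game.
   Context: The GKS game with parameter $n$ (a positive integer). A strategy pair $(S,T)$ consists of a function $S$ assigning a bit in $\{0,1\}$ to every sequence $\pi_1\pi_2\ldots\pi_i$ of distinct elements of $[n]=\{1,\dots,n\}$ with $1\le i\le n-1$, and a function $T:\{0,1\}^n\to 2^{[n]}$. For a permutation $\pi=\pi_1\ldots\pi_n$ of $[n]$ and a bit $b$, the final array $A_{\rm final}\in\{0,1\}^n$ is defined by $A_{\rm final}[\pi_i]=S(\pi_1\ldots\pi_i)$ for $1\le i\le n-1$ and $A_{\rm final}[\pi_n]=b$. The pair $(S,T)$ is a $(k,n)$ strategy if for every permutation $\pi$ of $[n]$ and every bit $b$ we have $\pi_n\in T(A_{\rm final})$, and moreover $|T(\sigma)|\le k$ for every $\sigma\in\{0,1\}^n$. *)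

(* [n] = {1..n} is modelled by 'I_n = {0..n-1}. *)
From mathcomp Require Import all_boot all_fingroup.
Set Implicit Arguments. Unset Strict Implicit. Unset Printing Implicit Defensive.

(* A permutation pi of [n] is p : {perm 'I_n}; pi_i (1-indexed) is p (i-1).
   The first-player function S is a total function on sequences over 'I_n;
   only its values on sequences p 0, ..., p (i-1) with 1 <= i <= n-1 matter. *)

Definition final_array (n : nat) (S : seq 'I_n -> bool) (p : {perm 'I_n})
    (b : bool) : {ffun 'I_n -> bool} :=
  [ffun x => let j := val (p^-1 x)%g in
     if j < n.-1 then S [seq p i | i <- take j.+1 (enum 'I_n)] else b].

Definition is_strategy (k n : nat) (S : seq 'I_n -> bool)
    (T : {ffun 'I_n -> bool} -> {set 'I_n}) : Prop :=
  (forall (p : {perm 'I_n}) (b : bool) (j : 'I_n),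
      val j = n.-1 -> p j \in T (final_array S p b))
  /\ (forall sigma : {ffun 'I_n -> bool}, #|T sigma| <= k).
Arguments is_strategy : clear implicits.

From mathcomp Require Import all_boot all_fingroup.
Set Implicit Arguments. Unset Strict Implicit. Unset Printing Implicit Defensive.

(* Strategies compose.  Given strategies for [A] and [Y], play on [A * Y] row by
   row: in row [a] the first player follows the [Y]-strategy on the moves made so
   far in that row, except on the move completing the row, where he writes the bit
   that makes the parity of the row equal to the bit the [A]-strategy would write
   at [a], the completed rows being read, in the order of completion, as a play on
   [A].  The last position lies in the only row never completed, so the
   [A]-guesser applied to the row parities finds that row, and the [Y]-guesser
   applied to that row finds the position: [k1 * k2] guesses on [n1 * n2] positions.

   The base case is a (5, 30) strategy on 5 rows of 6 positions, using six binary
   words of length 6 at pairwise distance at least 3, indexed by the positions of a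
   row.  In each row the first player writes the word indexed by the first position
   played in it, flipping the bit of the move completing the row.  A completed row
   is thus a word with one error, which locates its last move; the unfinished row
   is either a word, and the last position is one of the 5 others, or a word with
   one error at the last position.  Either way 5 guesses suffice. *)

Section Plays.
Variable X : finType.

Definition final_word (S : seq X -> bool) (s : seq X) (b : bool) : {ffun X -> bool} :=
  [ffun x => if x \in s then S (take (index x s).+1 s) else b].

(* [s] is the order in which all positions but the last one, [y], are played. *)
Definition strategy_on (k : nat) (S : seq X -> bool)
    (T : {ffun X -> bool} -> {set X}) : Prop :=
  (forall s y b, uniq (y :: s) -> (size s).+1 = #|X| -> y \in T (final_word S s b))
  /\ (forall sigma, #|T sigma| <= k).

Lemma uniq_full_mem (u : seq X) : uniq u -> size u = #|X| -> forall z, z \in u.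
Proof.
move=> u_uniq; rewrite -(card_uniqP u_uniq) => /subset_cardP/(_ (subset_predT _)) eq_u z.
by rewrite eq_u.
Qed.

Lemma uniq_covering_size (u : seq X) : uniq u -> (forall z, z \in u) -> size u = #|X|.
Proof. by move=> u_uniq u_cover; rewrite -(card_uniqP u_uniq); apply: eq_card. Qed.

End Plays.
Arguments strategy_on : clear implicits.

Lemma final_word_map (X X' : finType) (h : X' -> X) (S : seq X -> bool) s b x :
  injective h -> final_word (S \o map h) s b x = final_word S (map h s) b (h x).
Proof. by move=> h_inj; rewrite !ffunE /= mem_map // index_map // map_take. Qed.

Lemma strategy_on_eq_card (X X' : finType) k S T : #|X| = #|X'| ->
  strategy_on X k S T -> exists S' T', strategy_on X' k S' T'.
Proof.
move=> eq_card [S_wins T_small].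
pose h (x' : X') : X := enum_val (cast_ord (esym eq_card) (enum_rank x')).
pose h' (x : X) : X' := enum_val (cast_ord eq_card (enum_rank x)).
have hK : cancel h h' by move=> x'; rewrite /h /h' enum_valK cast_ordKV enum_rankK.
have h'K : cancel h' h by move=> x; rewrite /h /h' enum_valK cast_ordK enum_rankK.
have h_inj := can_inj hK.
exists (S \o map h), (fun sigma => h' @: T [ffun x => sigma (h' x)]); split; last first.
  by move=> sigma; apply: leq_trans (leq_imset_card _ _) (T_small _).
move=> s y b sy_uniq s_size; rewrite -[y]hK; apply: imset_f.
have -> : [ffun x => final_word (S \o map h) s b (h' x)] = final_word S (map h s) b.
  by apply/ffunP => x; rewrite ffunE final_word_map // h'K.
apply: S_wins; last by rewrite size_map s_size eq_card.
by rewrite -(map_inj_uniq h_inj) in sy_uniq.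
Qed.

Lemma mem_take_enum_ord n (i : 'I_n) m : (i \in take m (enum 'I_n)) = (i < m).
Proof.
rewrite -(mem_map val_inj) map_take val_enum_ord take_iota mem_iota /=.
by rewrite leq_min ltn_ord andbT.
Qed.

Lemma index_take_enum_ord n (i : 'I_n) m : i < m -> index i (take m (enum 'I_n)) = i.
Proof.
move=> lt_im; rewrite -(index_map val_inj) map_take val_enum_ord take_iota.
have lt_i_min : i < minn m n by rewrite leq_min lt_im ltn_ord.
by rewrite -[X in index X](nth_iota 0 0 lt_i_min) index_uniq ?size_iota ?iota_uniq.
Qed.

Lemma strategy_on_ord k n S T : strategy_on 'I_n k S T -> is_strategy k n S T.
Proof.
move=> [S_wins T_small]; split=> // p b j j_last.
have n_gt0 : 0 < n by apply: leq_ltn_trans (ltn_ord j).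
set s := [seq p i | i <- take n.-1 (enum 'I_n)].
have -> : final_array S p b = final_word S s b.
  apply/ffunP => x; rewrite !ffunE /= -[in RHS](permKV p x); set i := (p^-1 x)%g.
  rewrite /s (mem_map perm_inj) index_map ?mem_take_enum_ord; last exact: perm_inj.
  case: ifP => // lt_i.
  by rewrite index_take_enum_ord // !map_take take_takel.
apply: S_wins.
  rewrite -/(map p (j :: _)) (map_inj_uniq perm_inj) /= mem_take_enum_ord j_last ltnn.
  by rewrite take_uniq // enum_uniq.
by rewrite size_map size_take size_enum_ord ltn_predL n_gt0 prednK ?card_ord.
Qed.

Lemma strategy_on_unit : strategy_on unit 1 (fun _ => false) (fun _ => setT).
Proof. by split=> [s y b _ _|sigma]; rewrite ?inE // cardsT card_unit. Qed.

Lemma filter_take_index (X : eqType) (P : pred X) (s : seq X) x :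
  x \in s -> P x ->
  filter P (take (index x s).+1 s) = take (index x (filter P s)).+1 (filter P s).
Proof.
elim: s => [//|w s IHs] /=; rewrite inE => x_in Px.
have [->|neq_wx] := eqVneq w x; first by rewrite Px /= ?eqxx /= ?take0.
rewrite eq_sym (negbTE neq_wx) /= in x_in.
by case: (P w) => /=; rewrite ?(negbTE neq_wx) /= IHs.
Qed.

Lemma take_index_rcons (X : eqType) (s : seq X) x :
  x \in s -> take (index x s).+1 s = rcons (take (index x s) s) x.
Proof. by move=> x_in; rewrite (take_nth x) ?index_mem // nth_index. Qed.

Lemma pair_inj (A Y : Type) (a : A) : injective (@pair A Y a).
Proof. by move=> z1 z2 []. Qed.

Section Blocks.
Variables (A Y : eqType).
Implicit Types (a : A) (q : seq (A * Y)).

Definition block a q : seq Y := [seq x.2 | x <- q & x.1 == a].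

Lemma filter_block a q : [seq x <- q | x.1 == a] = map (pair a) (block a q).
Proof.
rewrite -map_comp; apply/esym/map_id_in => -[a' z].
by rewrite mem_filter /= => /andP[/eqP -> _].
Qed.

Lemma mem_block a q z : (z \in block a q) = ((a, z) \in q).
Proof. by rewrite -(mem_map (@pair_inj A Y a)) -filter_block mem_filter /= eqxx. Qed.

Lemma uniq_block a q : uniq q -> uniq (block a q).
Proof.
by move=> q_uniq; rewrite -(map_inj_uniq (@pair_inj A Y a)) -filter_block filter_uniq.
Qed.

Lemma block_take a z q : (a, z) \in q ->
  block a (take (index (a, z) q).+1 q) = take (index z (block a q)).+1 (block a q).
Proof.
move=> az_in; apply: (inj_map (@pair_inj A Y a)).
rewrite map_take -!filter_block -(index_map (@pair_inj A Y a)) -filter_block.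
exact: filter_take_index.
Qed.

Lemma block_rcons a q x :
  block a (rcons q x) = if x.1 == a then rcons (block a q) x.2 else block a q.
Proof. by rewrite /block filter_rcons; case: ifP; rewrite ?map_rcons. Qed.

Lemma block_rev a q : block a (rev q) = rev (block a q).
Proof. by rewrite /block filter_rev map_rev. Qed.

End Blocks.

Lemma size_block_le (A : eqType) (Y : finType) (a : A) (q : seq (A * Y)) :
  uniq q -> size (block a q) <= #|Y|.
Proof. by move=> q_uniq; rewrite -(card_uniqP (uniq_block a q_uniq)) max_card. Qed.

Lemma size_block_full_play (A Y : finType) (s : seq (A * Y)) y a :
  uniq (y :: s) -> (size s).+1 = #|{: A * Y}| ->
  size (block a s) = if a == y.1 then #|Y|.-1 else #|Y|.
Proof.
move=> ys_uniq ys_size.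
have <- : size (block a (y :: s)) = #|Y|.
  apply: uniq_covering_size => [|z]; first exact: uniq_block.
  by rewrite mem_block (uniq_full_mem ys_uniq).
by rewrite /block /=; case: (eqVneq y.1 a).
Qed.

Section CompletedBlocks.
Variables (A : eqType) (Y : finType).
Implicit Types (q r : seq (A * Y)).

Fixpoint completed_rev r : seq A :=
  if r is x :: r' then
    completed_rev r' ++ (if size (block x.1 r) == #|Y| then [:: x.1] else [::])
  else [::].

Definition completed q := completed_rev (rev q).

Lemma completed_rcons q x : completed (rcons q x) =
  completed q ++ (if size (block x.1 (rcons q x)) == #|Y| then [:: x.1] else [::]).
Proof. by rewrite /completed rev_rcons /= -rev_rcons block_rev size_rev. Qed.

Lemma prefix_completed q1 q2 : prefix (completed q1) (completed (q1 ++ q2)).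
Proof.
elim/last_ind: q2 => [|q2 x IHq]; first by rewrite cats0 prefix_refl.
by rewrite -rcons_cat completed_rcons prefix_catl.
Qed.

Hypothesis Y_gt0 : 0 < #|Y|.

Lemma mem_completed q a : uniq q -> (a \in completed q) = (size (block a q) == #|Y|).
Proof.
elim/last_ind: q => [|q x IHq] qx_uniq; first by rewrite eq_sym eqn0Ngt Y_gt0.
move: (qx_uniq); rewrite rcons_uniq => /andP[_ q_uniq].
rewrite completed_rcons mem_cat IHq // !block_rcons.
have [<-|neq_xa] := eqVneq x.1 a; last first.
  by case: ifP => _; rewrite ?mem_seq1 ?in_nil ?orbF // [a == _]eq_sym (negbTE neq_xa) orbF.
have := size_block_le x.1 qx_uniq; rewrite block_rcons !eqxx size_rcons => lt_q.
by rewrite (ltn_eqF lt_q) /=; case: ifP; rewrite ?mem_seq1 ?eqxx.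
Qed.

Lemma uniq_completed q : uniq q -> uniq (completed q).
Proof.
elim/last_ind: q => [//|q x IHq] qx_uniq.
move: (qx_uniq); rewrite rcons_uniq => /andP[_ q_uniq].
rewrite completed_rcons block_rcons eqxx size_rcons.
case: ifP => [/eqP full|_]; last by rewrite cats0 IHq.
by rewrite cat_uniq IHq //= orbF mem_completed // -full neq_ltn ltnSn.
Qed.

Lemma completed_take q x : uniq q -> x \in q ->
  size (block x.1 (take (index x q).+1 q)) = #|Y| ->
  completed (take (index x q).+1 q) = take (index x.1 (completed q)).+1 (completed q).
Proof.
move=> q_uniq x_in full.
have /prefixP[t ->] : prefix (completed (take (index x q).+1 q)) (completed q).
  by rewrite -{3}(cat_take_drop (index x q).+1 q) prefix_completed.
move: full; rewrite (take_index_rcons x_in); set u := take _ q => full.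
have x1_notin : x.1 \notin completed u.
  rewrite mem_completed ?(take_uniq _ q_uniq) //.
  by move: full; rewrite block_rcons eqxx size_rcons => <-; rewrite neq_ltn ltnSn.
rewrite completed_rcons full eqxx -catA index_cat (negbTE x1_notin) /= eqxx addn0.
by rewrite take_cat ltnNge leqnSn /= subSnn /= take0.
Qed.

End CompletedBlocks.

Definition row (A Y : finType) (sigma : {ffun A * Y -> bool}) (a : A) : {ffun Y -> bool} :=
  [ffun z => sigma (a, z)].

Definition move_strategy (X : Type) (Sb : X -> seq X -> bool) (q : seq X) : bool :=
  if q is x0 :: q' then Sb (last x0 q') q else false.

Lemma move_strategy_rcons (X : Type) (Sb : X -> seq X -> bool) q x :
  move_strategy Sb (rcons q x) = Sb x (rcons q x).
Proof. by case: q => [|x0 q] //=; rewrite last_rcons. Qed.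

Lemma final_word_move_strategy (A Y : finType) (Sb : A * Y -> seq (A * Y) -> bool) s b a z :
  final_word (move_strategy Sb) s b (a, z) =
  if z \in block a s then Sb (a, z) (take (index (a, z) s).+1 s) else b.
Proof.
rewrite ffunE mem_block; case: ifP => // az_in.
by rewrite (take_index_rcons az_in) move_strategy_rcons.
Qed.

Lemma leq_card_bigcup (I X : finType) (P : pred I) (F : I -> {set X}) :
  #|\bigcup_(i | P i) F i| <= \sum_(i | P i) #|F i|.
Proof.
apply: (big_ind2 (fun (U : {set X}) n => #|U| <= n)); first by rewrite cards0.
  by move=> U1 n1 U2 n2 le1 le2; apply: leq_trans (leq_card_setU _ _) (leq_add le1 le2).
by [].
Qed.

Section Product.
Variables (A Y : finType) (S1 : seq A -> bool) (T1 : {ffun A -> bool} -> {set A}).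
Variables (S2 : seq Y -> bool) (T2 : {ffun Y -> bool} -> {set Y}).

Definition play_parity (r : seq Y) : bool :=
  \big[addb/false]_(w <- r) final_word S2 r false w.

Definition product_move (x : A * Y) (q : seq (A * Y)) : bool :=
  let r := block x.1 q in
  if size r < #|Y| then S2 r else S1 (completed q) (+) play_parity (take (size r).-1 r).

Definition row_parity (sigma : {ffun A * Y -> bool}) : {ffun A -> bool} :=
  [ffun a => \big[addb/false]_(z : Y) sigma (a, z)].

Definition product_target (sigma : {ffun A * Y -> bool}) : {set A * Y} :=
  \bigcup_(a in T1 (row_parity sigma)) [set (a, z) | z in T2 (row sigma a)].

Lemma card_product_target k1 k2 sigma :
  (forall tau, #|T1 tau| <= k1) -> (forall tau, #|T2 tau| <= k2) ->
  #|product_target sigma| <= k1 * k2.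
Proof.
move=> T1_small T2_small; apply: leq_trans (leq_card_bigcup _ _) _.
apply: (@leq_trans (\sum_(a in T1 (row_parity sigma)) k2)).
  by apply: leq_sum => a _; apply: leq_trans (leq_imset_card _ _) (T2_small _).
by rewrite sum_nat_const leq_mul2r T1_small orbT.
Qed.

Section ProductPlay.
Variables (s : seq (A * Y)) (ya : A) (yz : Y) (b : bool).
Hypotheses (play_uniq : uniq ((ya, yz) :: s)) (play_size : (size s).+1 = #|{: A * Y}|).

Let sigma := final_word (move_strategy product_move) s b.

Let s_uniq : uniq s := proj2 (andP play_uniq).
Let Y_gt0 : 0 < #|Y|. Proof. by apply/card_gt0P; exists yz. Qed.

Lemma product_word a z : sigma (a, z) =
  if z \in block a s then
    if (index z (block a s)).+1 < #|Y| then S2 (take (index z (block a s)).+1 (block a s))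
    else S1 (completed (take (index (a, z) s).+1 s))
         (+) play_parity (take (index z (block a s)) (block a s))
  else b.
Proof.
rewrite final_word_move_strategy; case: ifP => // z_in.
rewrite /product_move /= block_take -?mem_block // size_takel ?index_mem //=.
by rewrite take_takel.
Qed.

Lemma product_row_final : row sigma ya = final_word S2 (block ya s) b.
Proof.
have size_final : size (block ya s) = #|Y|.-1.
  by rewrite (size_block_full_play _ play_uniq) ?eqxx.
apply/ffunP => z; rewrite [LHS]ffunE product_word [RHS]ffunE; case: ifP => // z_in.
by rewrite -(prednK Y_gt0) ltnS -size_final index_mem z_in.
Qed.

Lemma mem_completed_full_play a : (a \in completed s) = (a != ya).
Proof.
rewrite mem_completed // (size_block_full_play _ play_uniq) //=.
by case: (eqVneq a ya) => _ /=; rewrite ?eqxx // ltn_eqF // ltn_predL.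
Qed.

Lemma row_parity_completed a : a != ya ->
  row_parity sigma a = S1 (take (index a (completed s)).+1 (completed s)).
Proof.
move=> neq_a.
have full : size (block a s) = #|Y|.
  by rewrite (size_block_full_play _ play_uniq) // (negbTE neq_a).
have cover := uniq_full_mem (uniq_block a s_uniq) full.
have [r [y block_a]] : exists r y, block a s = rcons r y.
  case/lastP: (block a s) full => [|r y _]; last by exists r, y.
  by move=> Y0; move: Y_gt0; rewrite -Y0.
have size_r : (size r).+1 = #|Y| by rewrite -full block_a size_rcons.
have /andP[y_notin r_uniq] : (y \notin r) && uniq r by rewrite -rcons_uniq -block_a uniq_block.
have index_y : index y (block a s) = size r.
  by rewrite block_a -cats1 index_cat (negbTE y_notin) /= eqxx addn0.
have bit_r w : w \in r -> sigma (a, w) = final_word S2 r false w.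
  move=> w_in; rewrite product_word ffunE w_in block_a mem_rcons inE w_in orbT.
  rewrite -cats1 index_cat w_in takel_cat ?index_mem //.
  by rewrite -size_r ltnS index_mem w_in.
have bit_y :
    sigma (a, y) = S1 (take (index a (completed s)).+1 (completed s)) (+) play_parity r.
  have ay_in : (a, y) \in s by rewrite -mem_block block_a mem_rcons mem_head.
  rewrite product_word index_y -size_r ltnn block_a mem_rcons mem_head.
  rewrite -cats1 take_size_cat // completed_take // block_take // index_y.
  by rewrite block_a take_oversize ?size_rcons.
have enum_Y : perm_eq (index_enum Y) (rcons r y).
  apply: uniq_perm; rewrite ?index_enum_uniq ?rcons_uniq ?y_notin // => z.
  by rewrite mem_index_enum -block_a cover.
rewrite ffunE (perm_big _ enum_Y) -cats1 big_cat big_seq1 /= bit_y (eq_big_seq _ bit_r).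
by rewrite addbC -addbA addbb addbF.
Qed.

Lemma row_parity_final : row_parity sigma = final_word S1 (completed s) (row_parity sigma ya).
Proof.
apply/ffunP => a; rewrite [RHS]ffunE mem_completed_full_play.
by case: eqVneq => [->|neq_a] //=; rewrite row_parity_completed.
Qed.

End ProductPlay.

Lemma product_strategy k1 k2 :
  strategy_on A k1 S1 T1 -> strategy_on Y k2 S2 T2 ->
  strategy_on (A * Y)%type (k1 * k2) (move_strategy product_move) product_target.
Proof.
move=> [S1_wins T1_small] [S2_wins T2_small].
split=> [s [ya yz] b play_uniq play_size|sigma]; last exact: card_product_target.
have [s_uniq Y_gt0] : uniq s /\ 0 < #|Y|.
  by split; [case/andP: play_uniq | apply/card_gt0P; exists yz].
have mem_c := mem_completed_full_play play_uniq play_size.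
have c_uniq : uniq (ya :: completed s) by rewrite /= mem_c eqxx uniq_completed.
apply/bigcupP; exists ya.
  rewrite (row_parity_final b play_uniq play_size); apply: S1_wins => //.
  by apply: (uniq_covering_size c_uniq) => a; rewrite inE mem_c; case: eqVneq.
apply/imsetP; exists yz => //.
rewrite (product_row_final b play_uniq play_size); apply: S2_wins.
  by rewrite /= mem_block uniq_block ?andbT; case/andP: play_uniq.
by rewrite (size_block_full_play _ play_uniq) // eqxx prednK.
Qed.

End Product.

Definition hamming (Y : finType) (u v : {ffun Y -> bool}) : nat := #|[set z | u z != v z]|.

Definition flip (Y : finType) (w : {ffun Y -> bool}) (y : Y) : {ffun Y -> bool} :=
  [ffun z => w z (+) (z == y)].

Section OneErrorCorrectingCode.
Variables (I Y : finType) (code : I -> {ffun Y -> bool}).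
Hypothesis code_dist : forall f f', f != f' -> 2 < hamming (code f) (code f').

Lemma code_eq_off f f' (D : {set Y}) :
  #|D| <= 2 -> (forall z, z \notin D -> code f z = code f' z) -> f = f'.
Proof.
move=> D_small agree; apply/eqP/negPn/negP => /code_dist; rewrite ltnNge => /negP; apply.
apply: leq_trans D_small; apply: subset_leq_card; apply/subsetP => z; rewrite inE.
by apply: contraR => /agree ->; rewrite eqxx.
Qed.

Lemma code_inj : injective code.
Proof.
by move=> f f' eq_code; apply: (@code_eq_off _ _ set0) => [|z _]; rewrite ?cards0 ?eq_code.
Qed.

Lemma flip_code_inj f f' y y' : flip (code f) y = flip (code f') y' -> y = y'.
Proof.
move=> eq_flip; have agree z : code f z (+) (z == y) = code f' z (+) (z == y').
  by have /ffunP/(_ z) := eq_flip; rewrite !ffunE.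
have eq_f : f = f'.
  apply: (@code_eq_off _ _ [set y; y']) => [|z]; first by rewrite cards2; case: (_ != _).
  rewrite !inE negb_or => /andP[/negbTE zy /negbTE zy'].
  by have := agree z; rewrite zy zy' !addbF.
move: (agree y); rewrite eq_f eqxx; case: eqVneq => [//|_].
by rewrite addbF; case: (code f' y).
Qed.

Lemma flip_code_neq f f' y : flip (code f) y != code f'.
Proof.
apply/eqP => eq_flip; have agree z : code f z (+) (z == y) = code f' z.
  by have /ffunP/(_ z) := eq_flip; rewrite !ffunE.
have eq_f : f = f'.
  apply: (@code_eq_off _ _ [set y]) => [|z]; first by rewrite cards1.
  by rewrite inE => /negbTE zy; rewrite -agree zy addbF.
by move: (agree y); rewrite eq_f eqxx; case: (code f' y).
Qed.

End OneErrorCorrectingCode.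

Section CodeStrategy.
Variables (A Y : finType) (code : Y -> {ffun Y -> bool}).
Hypothesis code_dist : forall f f', f != f' -> 2 < hamming (code f) (code f').

Definition code_move (x : A * Y) (q : seq (A * Y)) : bool :=
  let r := block x.1 q in
  let w := code (head x.2 r) in
  if size r < #|Y| then w x.2 else ~~ w x.2.

Definition is_codeword (w : {ffun Y -> bool}) : bool := [exists f, w == code f].

Definition code_target (sigma : {ffun A * Y -> bool}) : {set A * Y} :=
  if [pick a | is_codeword (row sigma a)] is Some a then
    [set (a, z) | z in [set z | row sigma a != code z]]
  else [set x | [exists f, row sigma x.1 == flip (code f) x.2]].

Lemma card_code_target sigma : #|code_target sigma| <= maxn #|A| #|Y|.-1.
Proof.
rewrite /code_target leq_max; case: pickP => [a /existsP[f /eqP row_a] | _].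
  rewrite card_imset -?(cardsC1 f); last exact: pair_inj.
  apply/orP; right; apply: subset_leq_card; apply/subsetP => z; rewrite !inE row_a.
  by apply: contra_neq => ->.
rewrite -(@card_in_imset _ _ fst) ?max_card //.
move=> [a y] [a' y'] + + /= eq_a.
rewrite !inE /= => /existsP[f /eqP row_a] /existsP[f' /eqP row_a'].
by move: row_a'; rewrite -eq_a row_a => /(flip_code_inj code_dist) ->.
Qed.

Hypothesis Y_gt1 : 1 < #|Y|.

Section CodePlay.
Variables (s : seq (A * Y)) (ya : A) (yz : Y) (b : bool).
Hypotheses (play_uniq : uniq ((ya, yz) :: s)) (play_size : (size s).+1 = #|{: A * Y}|).

Let sigma := final_word (move_strategy code_move) s b.

Let s_uniq : uniq s := proj2 (andP play_uniq).

Lemma code_word a z : sigma (a, z) =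
  if z \in block a s then
    if (index z (block a s)).+1 < #|Y| then code (head z (block a s)) z
    else ~~ code (head z (block a s)) z
  else b.
Proof.
rewrite final_word_move_strategy; case: ifP => // z_in.
rewrite /code_move /= block_take -?mem_block // size_takel ?index_mem //=.
by case: (block a s) z_in.
Qed.

Lemma code_row_completed a : a != ya -> exists f y, row sigma a = flip (code f) y.
Proof.
move=> neq_a.
have full : size (block a s) = #|Y|.
  by rewrite (size_block_full_play _ play_uniq) // (negbTE neq_a).
have cover := uniq_full_mem (uniq_block a s_uniq) full.
have [r [y block_a]] : exists r y, block a s = rcons r y.
  case/lastP: (block a s) full => [|r y _]; last by exists r, y.
  by move=> Y0; move: Y_gt1; rewrite -Y0.
have size_r : (size r).+1 = #|Y| by rewrite -full block_a size_rcons.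
have y_notin : y \notin r by move: (uniq_block a s_uniq); rewrite block_a rcons_uniq => /andP[].
exists (head y (rcons r y)), y; apply/ffunP => z.
rewrite [LHS]ffunE code_word cover [RHS]ffunE block_a.
have [->|neq_z] := eqVneq z y.
  by rewrite -cats1 index_cat (negbTE y_notin) /= eqxx addn0 size_r ltnn addbT.
have z_in : z \in r by move: (cover z); rewrite block_a mem_rcons inE (negbTE neq_z).
rewrite -cats1 index_cat z_in -size_r ltnS index_mem z_in addbF.
by case: (r) z_in.
Qed.

Lemma code_row_final :
  exists2 f, f != yz & row sigma ya = code f \/ row sigma ya = flip (code f) yz.
Proof.
have size_final : (size (block ya s)).+1 = #|Y|.
  by rewrite (size_block_full_play _ play_uniq) ?eqxx ?prednK ?(ltnW Y_gt1).
have yz_notin : yz \notin block ya s by rewrite mem_block; case/andP: play_uniq.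
have final_uniq : uniq (yz :: block ya s) by rewrite /= yz_notin uniq_block.
have cover z : z != yz -> z \in block ya s.
  by move=> neq_z; move: (uniq_full_mem final_uniq size_final z); rewrite inE (negbTE neq_z).
have [f [r block_ya]] : exists f r, block ya s = f :: r.
  case: (block ya s) size_final => [|f r _]; last by exists f, r.
  by move=> Y1; move: Y_gt1; rewrite -Y1.
have agree z : z != yz -> sigma (ya, z) = code f z.
  move=> neq_z; rewrite code_word cover // -size_final ltnS index_mem cover //.
  by rewrite block_ya.
exists f; first by apply: contraNneq yz_notin => <-; rewrite block_ya mem_head.
have final_bit : sigma (ya, yz) = b by rewrite code_word (negbTE yz_notin).
have [eq_b|neq_b] := eqVneq b (code f yz); [left|right]; apply/ffunP => z.
  by rewrite [LHS]ffunE; have [->|/agree] := eqVneq z yz; rewrite ?final_bit.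
rewrite [LHS]ffunE [RHS]ffunE; have [->|neq_z] := eqVneq z yz; last by rewrite agree ?addbF.
by rewrite final_bit addbT; case: (b) neq_b; case: (code f yz).
Qed.

Lemma code_target_final : (ya, yz) \in code_target sigma.
Proof.
have [f neq_f row_ya] := code_row_final.
rewrite /code_target; case: pickP => [a /existsP[f' /eqP row_a] | no_codeword].
  have eq_a : a = ya.
    apply/eqP/negPn/negP => /code_row_completed[g [y row_a']].
    by move: (flip_code_neq code_dist g f' y); rewrite -row_a' row_a eqxx.
  rewrite -eq_a in row_ya *; apply/imsetP; exists yz => //; rewrite inE.
  case: row_ya => ->; first by apply: contra_neq neq_f => /(code_inj code_dist).
  by rewrite flip_code_neq.
rewrite inE; apply/existsP; exists f; case: row_ya => row_ya; last by rewrite row_ya.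
by move: (no_codeword ya); rewrite /is_codeword row_ya => /existsP[]; exists f.
Qed.

End CodePlay.

Lemma code_strategy :
  strategy_on (A * Y)%type (maxn #|A| #|Y|.-1) (move_strategy code_move) code_target.
Proof.
split=> [s [ya yz] b play_uniq play_size|sigma]; last exact: card_code_target.
exact: code_target_final.
Qed.

End CodeStrategy.

Lemma card_set_ord n (P : nat -> bool) : #|[set z : 'I_n | P z]| = count P (iota 0 n).
Proof. by rewrite cardsE cardE /enum_mem size_filter -enumT -val_enum_ord count_map. Qed.

(* Six words of the binary linear code spanned by 001011, 010101 and 100110. *)
Definition code6_rows : seq (seq bool) :=
  [:: [:: false; false; false; false; false; false];
      [:: false; false; true;  false; true;  true ];
      [:: false; true;  false; true;  false; true ];
      [:: false; true;  true;  true;  true;  false];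
      [:: true;  false; false; true;  true;  false];
      [:: true;  false; true;  true;  false; true ]].

Definition code6 (f : 'I_6) : {ffun 'I_6 -> bool} :=
  [ffun z : 'I_6 => nth false (nth [::] code6_rows f) z].

Lemma code6_dist f f' : f != f' -> 2 < hamming (code6 f) (code6 f').
Proof.
pose dist (i j : nat) := count (fun z => nth false (nth [::] code6_rows i) z
                                       != nth false (nth [::] code6_rows j) z) (iota 0 6).
have dist_iota :
  all (fun i => all (fun j => (i != j) ==> (2 < dist i j)) (iota 0 6)) (iota 0 6) by [].
have in_iota (i : 'I_6) : val i \in iota 0 6 by rewrite mem_iota ltn_ord.
move=> neq_f; have -> : hamming (code6 f) (code6 f') = dist f f'.
  by rewrite /hamming /dist -card_set_ord; apply: eq_card => z; rewrite !inE !ffunE.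
by move/allP/(_ _ (in_iota f))/allP/(_ _ (in_iota f'))/implyP: dist_iota; apply.
Qed.

Lemma strategy_5_30 :
  strategy_on ('I_5 * 'I_6)%type 5 (move_strategy (code_move code6)) (code_target code6).
Proof. by have := code_strategy 'I_5 code6_dist; rewrite !card_ord; apply. Qed.

Lemma strategy_pow l :
  exists (X : finType) S T, #|X| = 30 ^ l /\ strategy_on X (5 ^ l) S T.
Proof.
elim: l => [|l [X [S [T [card_X strat_X]]]]].
  exists unit%type, (fun _ => false), (fun _ => setT).
  by rewrite card_unit; split; last exact: strategy_on_unit.
exists ('I_5 * 'I_6 * X)%type,
  (move_strategy (product_move (move_strategy (code_move code6)) S)),
  (product_target (code_target code6) T).
rewrite !card_prod !card_ord card_X !expnS; split=> //.
exact: product_strategy strategy_5_30 strat_X.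
Qed.

Theorem lemma3 (l : nat) : 1 <= l ->
  exists (S : seq 'I_(30 ^ l) -> bool)
         (T : {ffun 'I_(30 ^ l) -> bool} -> {set 'I_(30 ^ l)}),
    is_strategy (5 ^ l) (30 ^ l) S T.
Proof.
move=> _; have [X [S [T [card_X strat_X]]]] := strategy_pow l.
have [S' [T' strat]] := strategy_on_eq_card (etrans card_X (esym (card_ord _))) strat_X.
by exists S', T'; apply: strategy_on_ord.
Qed.
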